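(* In the setting below, $\hat{w}_t$ is strictly increasing in $t$. Also, if $\eta \geq \eta_0$, then $\hat{w}_t \geq \gamma\eta/2 + \gamma(t-1)/16$ for all integers $1 \leq t \leq \tau$, and in particular $\hat{w}_t \geq 8\tilde{\lambda}$ for all $t \geq 1$.
   Context: Dimension $d=2$. Data $x_1,\dots,x_n\in\mathbb{R}^2$ with $\|x_i\|\le 1$, linearly separable (some $w$ has $\langle w,x_i\rangle>0$ for all $i$). $F(w) = \frac{1}{n}\sum_{i=1}^n \log(1+\exp(-\langle w, x_i\rangle))$. Maximum margin $\gamma = \max_{\|w\|=1}\min_i \langle w, x_i\rangle$ with maximizer the unit vector $w_*$. Gradient descent: $w_0=0$, $w_{t+1} = w_t - \eta\nabla F(w_t)$ with constant $\eta>0$. $\hat{w}_t = \langle w_t, w_*\rangle$. $\tau = \min\{t\ge 0: F(w_t)\le 1/(8\eta)\}$. $\eta_0 = \max(n, \frac{32}{\gamma^2}\log\frac{256}{\gamma^2})$. $\tilde{\lambda} = \log(8\eta)/\gamma$. *)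

From Stdlib Require Import Reals Lra.
From Coquelicot Require Import Coquelicot.
Open Scope R_scope.

Definition vec2 := (R * R)%type.
Definition inner (u v : vec2) : R := fst u * fst v + snd u * snd v.
Definition norm2 (u : vec2) : R := sqrt (inner u u).

Fixpoint sumR (f : nat -> R) (n : nat) : R :=
  match n with O => 0 | S k => sumR f k + f k end.

Fixpoint minR (f : nat -> R) (k : nat) : R :=
  match k with O => f O | S j => Rmin (minR f j) (f (S j)) end.

Definition F (n : nat) (x : nat -> vec2) (w : vec2) : R :=
  / INR n * sumR (fun i => ln (1 + exp (- inner w (x i)))) n.

Definition gradF (n : nat) (x : nat -> vec2) (w : vec2) : vec2 :=
  (Derive (fun s => F n x (s, snd w)) (fst w),
   Derive (fun s => F n x (fst w, s)) (snd w)).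

Fixpoint gd (n : nat) (x : nat -> vec2) (eta : R) (t : nat) : vec2 :=
  match t with
  | O => (0, 0)
  | S k => let w := gd n x eta k in
           let g := gradF n x w in
           (fst w - eta * fst g, snd w - eta * snd g)
  end.

(* margin of w on the data: min_{i < n} <w, x_i>   (meaningful for n >= 1) *)
Definition margin (n : nat) (x : nat -> vec2) (w : vec2) : R :=
  minR (fun i => inner w (x i)) (n - 1).

Definition eta0 (n : nat) (gamma : R) : R :=
  Rmax (INR n) (32 / gamma ^ 2 * ln (256 / gamma ^ 2)).

Definition lambda_tilde (eta gamma : R) : R := ln (8 * eta) / gamma.

(* The gradient of the logistic risk at w is -(1/n) sum_i s_i x_i with weights
   s_i = e^(-<w,x_i>) / (1 + e^(-<w,x_i>)) > 0, so a gradient step increases <w, w_*>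
   by (eta/n) sum_i s_i <x_i, w_*> >= (gamma eta / n) sum_i s_i > 0.  At w_0 = 0 every
   weight is 1/2, whence <w_1, w_*> >= gamma eta / 2.  While F(w_t) > 1/(8 eta) and eta >= n,
   the weights sum to at least n/(16 eta): a point with <w,x_i> <= 0 has weight >= 1/2,
   and otherwise each weight is at least half its loss.  So every later step adds at
   least gamma/16.  Finally eta >= (32/gamma^2) ln(256/gamma^2) is what makes
   8 ln(8 eta)/gamma <= gamma eta / 2. *)

From Stdlib Require Import Reals Lra Lia Classical.
From Coquelicot Require Import Coquelicot.
Open Scope R_scope.

Lemma sumR_ext (f g : nat -> R) m :
  (forall i, (i < m)%nat -> f i = g i) -> sumR f m = sumR g m.
Proof.
  induction m as [|m IH]; intros H; simpl; [reflexivity|].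
  rewrite IH by (intros; apply H; lia). rewrite H by lia. reflexivity.
Qed.

Lemma sumR_add (f g : nat -> R) m :
  sumR (fun i => f i + g i) m = sumR f m + sumR g m.
Proof. induction m as [|m IH]; simpl; [ring|]. rewrite IH. ring. Qed.

Lemma sumR_scal_l c (f : nat -> R) m : sumR (fun i => c * f i) m = c * sumR f m.
Proof. induction m as [|m IH]; simpl; [ring|]. rewrite IH. ring. Qed.

Lemma sumR_scal_r c (f : nat -> R) m : sumR (fun i => f i * c) m = sumR f m * c.
Proof. induction m as [|m IH]; simpl; [ring|]. rewrite IH. ring. Qed.

Lemma sumR_const c m : sumR (fun _ => c) m = INR m * c.
Proof. induction m as [|m IH]; cbn [sumR]; [simpl; ring|]. rewrite IH, S_INR. ring. Qed.

Lemma sumR_le (f g : nat -> R) m :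
  (forall i, (i < m)%nat -> f i <= g i) -> sumR f m <= sumR g m.
Proof.
  induction m as [|m IH]; intros H; simpl; [lra|].
  assert (sumR f m <= sumR g m) by (apply IH; intros; apply H; lia).
  assert (f m <= g m) by (apply H; lia).
  lra.
Qed.

Lemma sumR_nonneg (f : nat -> R) m :
  (forall i, (i < m)%nat -> 0 <= f i) -> 0 <= sumR f m.
Proof.
  intros H. rewrite <- (Rmult_0_r (INR m)), <- sumR_const. now apply sumR_le.
Qed.

Lemma sumR_term_le (f : nat -> R) m j :
  (forall i, (i < m)%nat -> 0 <= f i) -> (j < m)%nat -> f j <= sumR f m.
Proof.
  induction m as [|m IH]; intros H Hj; simpl; [lia|].
  destruct (Nat.eq_dec j m) as [->|Hjm].
  - assert (0 <= sumR f m) by (apply sumR_nonneg; intros; apply H; lia). lra.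
  - assert (f j <= sumR f m) by (apply IH; [intros; apply H|]; lia).
    assert (0 <= f m) by (apply H; lia). lra.
Qed.

Lemma minR_le (f : nat -> R) k i : (i <= k)%nat -> minR f k <= f i.
Proof.
  induction k as [|k IH]; intros Hi; simpl.
  - replace i with 0%nat by lia. lra.
  - destruct (Nat.eq_dec i (S k)) as [->|Hik]; [apply Rmin_r|].
    eapply Rle_trans; [apply Rmin_l | apply IH; lia].
Qed.

Lemma minR_pos (f : nat -> R) k : (forall i, (i <= k)%nat -> 0 < f i) -> 0 < minR f k.
Proof.
  induction k as [|k IH]; intros H; simpl; [apply H; lia|].
  apply Rmin_glb_lt; [apply IH; intros|]; apply H; lia.
Qed.

Lemma inner_comm u v : inner u v = inner v u.
Proof. unfold inner. ring. Qed.

Lemma inner_scal_l c u v : inner (c * fst u, c * snd u) v = c * inner u v.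
Proof. unfold inner; simpl. ring. Qed.

Lemma inner_le_norm2 u v : inner u v <= norm2 u * norm2 v.
Proof. unfold inner, norm2. pose proof (sqrt_cauchy (fst u) (snd u) (fst v) (snd v)) as H. now unfold Rsqr in H. Qed.

Lemma norm2_scal_inv w :
  0 < inner w w -> norm2 (/ norm2 w * fst w, / norm2 w * snd w) = 1.
Proof.
  intros Hw. unfold norm2 in *.
  assert (Hs : 0 < sqrt (inner w w)) by now apply sqrt_lt_R0.
  set (c := / sqrt (inner w w)).
  replace (inner (c * fst w, c * snd w) (c * fst w, c * snd w)) with (c * c * inner w w)
    by (unfold inner; simpl; ring).
  replace (c * c * inner w w) with 1.
  - apply sqrt_1.
  - unfold c. rewrite <- (sqrt_sqrt (inner w w)) at 3 by lra. field. lra.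
Qed.

Lemma margin_le_inner n x w i : (i < n)%nat -> margin n x w <= inner w (x i).
Proof. intros Hi. apply (minR_le (fun i => inner w (x i))). lia. Qed.

Lemma margin_pos n x w :
  (0 < n)%nat -> (forall i, (i < n)%nat -> 0 < inner w (x i)) -> 0 < margin n x w.
Proof. intros Hn Hw. apply minR_pos. intros i Hi. apply Hw. lia. Qed.

Lemma exists_unit_positive_margin n x :
  (0 < n)%nat -> (exists w, forall i, (i < n)%nat -> 0 < inner w (x i)) ->
  exists u, norm2 u = 1 /\ 0 < margin n x u.
Proof.
  intros Hn [w Hw].
  assert (Hww : 0 < inner w w).
  { specialize (Hw 0%nat Hn). destruct w as [w1 w2]. unfold inner in *; simpl in *.
    destruct (Req_dec w1 0), (Req_dec w2 0); nra. }
  exists (/ norm2 w * fst w, / norm2 w * snd w). split; [now apply norm2_scal_inv|].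
  apply margin_pos; [exact Hn|]. intros i Hi. rewrite inner_scal_l.
  apply Rmult_lt_0_compat; [|now apply Hw].
  apply Rinv_0_lt_compat, sqrt_lt_R0, Hww.
Qed.

Lemma margin_le_1 n x u :
  (0 < n)%nat -> (forall i, (i < n)%nat -> norm2 (x i) <= 1) -> norm2 u = 1 ->
  margin n x u <= 1.
Proof.
  intros Hn Hx Hu.
  pose proof (margin_le_inner n x u 0 Hn). pose proof (inner_le_norm2 u (x 0%nat)).
  pose proof (Hx 0%nat Hn). rewrite Hu in *. lra.
Qed.

Definition logistic_weight (z : R) : R := exp (- z) / (1 + exp (- z)).

Lemma is_derive_logistic_loss z :
  is_derive (fun z => ln (1 + exp (- z))) z (- logistic_weight z).
Proof.
  unfold logistic_weight. pose proof (exp_pos (- z)).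
  auto_derive; [lra|]. field. lra.
Qed.

Lemma is_derive_sumR (f : nat -> R -> R) (df : nat -> R) m s :
  (forall i, is_derive (f i) s (df i)) ->
  is_derive (fun y => sumR (fun i => f i y) m) s (sumR df m).
Proof.
  intros H. induction m as [|m IH]; simpl.
  - exact (is_derive_const (V := R_NormedModule) 0 s).
  - exact (is_derive_plus _ _ _ _ _ IH (H m)).
Qed.

Lemma is_derive_empirical_loss (g : nat -> R -> R) (dg : nat -> R) n s :
  (forall i, is_derive (g i) s (dg i)) ->
  is_derive (fun s => / INR n * sumR (fun i => ln (1 + exp (- g i s))) n) s
    (/ INR n * sumR (fun i => - logistic_weight (g i s) * dg i) n).
Proof.
  intros Hg. apply is_derive_scal, is_derive_sumR. intros i.
  pose proof (is_derive_comp _ _ s _ _ (is_derive_logistic_loss (g i s)) (Hg i)) as H.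
  rewrite Rmult_comm. exact H.
Qed.

Lemma gradF_fst n x w :
  fst (gradF n x w) = / INR n * sumR (fun i => - logistic_weight (inner w (x i)) * fst (x i)) n.
Proof.
  destruct w as [w1 w2]. apply is_derive_unique.
  apply (is_derive_empirical_loss (fun i s => inner (s, w2) (x i))).
  intros i. unfold inner; simpl. auto_derive; [exact I | ring].
Qed.

Lemma gradF_snd n x w :
  snd (gradF n x w) = / INR n * sumR (fun i => - logistic_weight (inner w (x i)) * snd (x i)) n.
Proof.
  destruct w as [w1 w2]. apply is_derive_unique.
  apply (is_derive_empirical_loss (fun i s => inner (w1, s) (x i))).
  intros i. unfold inner; simpl. auto_derive; [exact I | ring].
Qed.

Lemma gd_inner_step n x eta t v :
  inner (gd n x eta (S t)) v - inner (gd n x eta t) v =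
  eta / INR n * sumR (fun i => logistic_weight (inner (gd n x eta t) (x i)) * inner (x i) v) n.
Proof.
  cbn [gd]. set (w := gd n x eta t).
  transitivity (- eta * (fst (gradF n x w) * fst v + snd (gradF n x w) * snd v));
    [unfold inner; simpl; ring|].
  rewrite gradF_fst, gradF_snd.
  rewrite (sumR_ext (fun i => logistic_weight (inner w (x i)) * inner (x i) v) (fun i => -1 *
    (- logistic_weight (inner w (x i)) * fst (x i) * fst v +
     - logistic_weight (inner w (x i)) * snd (x i) * snd v)))
    by (intros; unfold inner; ring).
  rewrite sumR_scal_l, sumR_add, !sumR_scal_r. unfold Rdiv. ring.
Qed.

Lemma logistic_weight_pos z : 0 < logistic_weight z.
Proof. unfold logistic_weight. pose proof (exp_pos (- z)). apply Rdiv_lt_0_compat; lra. Qed.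

Lemma logistic_weight_0 : logistic_weight 0 = 1 / 2.
Proof. unfold logistic_weight. rewrite Ropp_0, exp_0. field. Qed.

Lemma logistic_weight_ge_half z : z <= 0 -> 1 / 2 <= logistic_weight z.
Proof.
  intros Hz. unfold logistic_weight.
  assert (Hu : 1 <= exp (- z)) by (pose proof (exp_ineq1_le (- z)); lra).
  apply Rmult_le_reg_r with (1 + exp (- z)); [lra|].
  field_simplify; lra.
Qed.

Lemma ln_le_sub1 y : 0 < y -> ln y <= y - 1.
Proof.
  intros Hy. rewrite <- (ln_exp (y - 1)). apply ln_le; [exact Hy|].
  pose proof (exp_ineq1_le (y - 1)). lra.
Qed.

Lemma logistic_weight_ge_half_loss z :
  0 <= z -> ln (1 + exp (- z)) / 2 <= logistic_weight z.
Proof.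
  intros Hz. unfold logistic_weight. set (u := exp (- z)).
  assert (Hu0 : 0 < u) by apply exp_pos.
  assert (Hu1 : u <= 1).
  { unfold u. rewrite <- exp_0. destruct (Rle_lt_or_eq_dec 0 z Hz) as [Hz0|<-].
    - left. apply exp_increasing. lra.
    - rewrite Ropp_0. lra. }
  assert (Hln : ln (1 + u) <= u) by (pose proof (ln_le_sub1 (1 + u)); lra).
  apply Rle_trans with (u / 2); [lra|].
  apply Rmult_le_reg_r with (2 * (1 + u)); [lra|].
  field_simplify; nra.
Qed.

Lemma sumR_logistic_weight_ge n x w eta :
  (0 < n)%nat -> INR n <= eta -> / (8 * eta) < F n x w ->
  INR n / (16 * eta) <= sumR (fun i => logistic_weight (inner w (x i))) n.
Proof.
  intros Hn Hne HF.
  assert (HN : 0 < INR n) by (apply lt_0_INR; lia).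
  assert (Hnonneg : forall i, (i < n)%nat -> 0 <= logistic_weight (inner w (x i)))
    by (intros; left; apply logistic_weight_pos).
  destruct (classic (exists j, (j < n)%nat /\ inner w (x j) <= 0)) as [[j [Hj Hz]]|Hpos].
  - pose proof (logistic_weight_ge_half _ Hz).
    pose proof (sumR_term_le _ n j Hnonneg Hj).
    assert (INR n / (16 * eta) <= 1 / 16).
    { apply Rmult_le_reg_r with (16 * eta); [lra|]. field_simplify; lra. }
    lra.
  - set (L := sumR (fun i => ln (1 + exp (- inner w (x i)))) n).
    assert (HL : INR n / (8 * eta) < L).
    { unfold F in HF. fold L in HF.
      apply Rmult_lt_reg_l with (/ INR n); [now apply Rinv_0_lt_compat|].
      replace (/ INR n * (INR n / (8 * eta))) with (/ (8 * eta)) by (field; lra). exact HF. }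
    assert (L / 2 <= sumR (fun i => logistic_weight (inner w (x i))) n).
    { unfold L, Rdiv. rewrite <- sumR_scal_r. apply sumR_le. intros i Hi.
      apply logistic_weight_ge_half_loss.
      apply Rnot_lt_le. intros Hneg. apply Hpos. exists i. split; [exact Hi | lra]. }
    assert (INR n / (16 * eta) = INR n / (8 * eta) / 2) by (field; lra).
    lra.
Qed.

Lemma ln_8eta_le a eta :
  0 < a <= 1 -> 32 / a * ln (256 / a) <= eta -> 16 * ln (8 * eta) <= a * eta.
Proof.
  intros Ha He.
  set (L := ln (256 / a)) in *.
  assert (HL : 1 <= L).
  { unfold L. rewrite <- (ln_exp 1). apply ln_le; [apply exp_pos|].
    pose proof exp_le_3.
    apply Rle_trans with 256; [lra|].
    apply Rmult_le_reg_r with a; [lra|]. field_simplify; nra. }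
  (* At e1 := 32 L / a, 16 ln(8 e1) = 16 (L + ln L) <= a e1 - 16; beyond e1 the left
     side grows with slope at most 16 / e1 <= a. *)
  set (e1 := 32 / a * L) in *.
  assert (He1 : 0 < e1) by (unfold e1; apply Rmult_lt_0_compat; [apply Rdiv_lt_0_compat|]; lra).
  assert (Hae1 : a * e1 = 32 * L) by (unfold e1; field; lra).
  assert (Hln8e1 : ln (8 * e1) = L + ln L).
  { replace (8 * e1) with (256 / a * L) by (unfold e1; field; lra).
    rewrite ln_mult; [reflexivity | apply Rdiv_lt_0_compat | ]; lra. }
  assert (Hln8eta : ln (8 * eta) = ln (8 * e1) + ln (eta / e1)).
  { rewrite <- ln_mult; [f_equal; field | | apply Rdiv_lt_0_compat]; lra. }
  pose proof (ln_le_sub1 L ltac:(lra)).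
  pose proof (ln_le_sub1 (eta / e1) ltac:(apply Rdiv_lt_0_compat; lra)).
  assert (Hslope : 16 * (eta / e1 - 1) <= a * (eta - e1)).
  { replace (16 * (eta / e1 - 1)) with ((eta - e1) * (16 / e1)) by (field; lra).
    rewrite (Rmult_comm a). apply Rmult_le_compat_l; [lra|].
    apply Rmult_le_reg_r with e1; [lra|].
    replace (16 / e1 * e1) with 16 by (field; lra).
    lra. }
  lra.
Qed.

Lemma lambda_tilde_le gamma eta :
  0 < gamma <= 1 -> 32 / gamma ^ 2 * ln (256 / gamma ^ 2) <= eta ->
  8 * lambda_tilde eta gamma <= gamma * eta / 2.
Proof.
  intros Hg He.
  assert (H := ln_8eta_le (gamma ^ 2) eta ltac:(simpl; nra) He).
  unfold lambda_tilde.
  apply Rmult_le_reg_r with (2 * gamma); [lra|].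
  field_simplify; [simpl in H; nra | lra].
Qed.

Section GradientDescent.

Variables (n : nat) (x : nat -> vec2) (eta gamma : R) (v : vec2).
Hypothesis Hn : (0 < n)%nat.
Hypothesis Heta : 0 < eta.
Hypothesis Hgamma : 0 < gamma.
Hypothesis Hv : forall i, (i < n)%nat -> gamma <= inner (x i) v.

Let w t := gd n x eta t.

Lemma gd_inner_increment_ge t :
  gamma * eta / INR n * sumR (fun i => logistic_weight (inner (w t) (x i))) n
  <= inner (w (S t)) v - inner (w t) v.
Proof.
  unfold w. rewrite gd_inner_step.
  assert (HN : 0 < INR n) by (apply lt_0_INR; lia).
  replace (gamma * eta / INR n * _)
    with (eta / INR n * sumR (fun i => logistic_weight (inner (gd n x eta t) (x i)) * gamma) n)
    by (rewrite sumR_scal_r; field; lra).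
  apply Rmult_le_compat_l; [left; apply Rdiv_lt_0_compat; lra|].
  apply sumR_le. intros i Hi.
  apply Rmult_le_compat_l; [left; apply logistic_weight_pos | now apply Hv].
Qed.

Lemma gd_inner_increasing t : inner (w t) v < inner (w (S t)) v.
Proof.
  pose proof (gd_inner_increment_ge t).
  assert (0 < sumR (fun i => logistic_weight (inner (w t) (x i))) n).
  { eapply Rlt_le_trans; [|apply (sumR_term_le _ n 0); [|exact Hn]].
    - apply logistic_weight_pos.
    - intros; left; apply logistic_weight_pos. }
  assert (0 < gamma * eta / INR n) by (apply Rdiv_lt_0_compat; [nra | apply lt_0_INR; lia]).
  nra.
Qed.

Lemma gd_inner_1 : gamma * eta / 2 <= inner (w 1) v.
Proof.
  pose proof (gd_inner_increment_ge 0) as H.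
  assert (HN : 0 < INR n) by (apply lt_0_INR; lia).
  replace (inner (w 0) v) with 0 in H by (unfold inner; simpl; ring).
  rewrite (sumR_ext _ (fun _ => 1 / 2)), sumR_const in H.
  - replace (gamma * eta / INR n * (INR n * (1 / 2))) with (gamma * eta / 2) in H
      by (field; lra).
    lra.
  - intros i Hi. rewrite <- logistic_weight_0. f_equal. unfold inner; simpl; ring.
Qed.

Lemma gd_inner_ge_1 t : (1 <= t)%nat -> inner (w 1) v <= inner (w t) v.
Proof.
  induction t as [|t IH]; intros Ht; [lia|].
  destruct (Nat.eq_dec t 0) as [->|Ht0]; [lra|].
  pose proof (gd_inner_increasing t). pose proof (IH ltac:(lia)). lra.
Qed.

Lemma gd_inner_linear_growth t :
  INR n <= eta -> (1 <= t)%nat ->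
  (forall s, (s < t)%nat -> / (8 * eta) < F n x (w s)) ->
  gamma * eta / 2 + gamma * (INR t - 1) / 16 <= inner (w t) v.
Proof.
  intros Hne. induction t as [|t IH]; intros Ht Hloss; [lia|].
  destruct (Nat.eq_dec t 0) as [->|Ht0].
  - pose proof gd_inner_1. simpl INR. lra.
  - pose proof (IH ltac:(lia) ltac:(intros s Hs; apply Hloss; lia)).
    pose proof (gd_inner_increment_ge t).
    assert (gamma / 16 <= gamma * eta / INR n *
                         sumR (fun i => logistic_weight (inner (w t) (x i))) n).
    { assert (HN : 0 < INR n) by (apply lt_0_INR; lia).
      apply Rle_trans with (gamma * eta / INR n * (INR n / (16 * eta))); [right; field; lra|].
      apply Rmult_le_compat_l; [left; apply Rdiv_lt_0_compat; nra|].
      apply sumR_logistic_weight_ge; [exact Hn | exact Hne | apply Hloss; lia]. }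
    rewrite S_INR. lra.
Qed.

End GradientDescent.

Theorem lemma2
  (n : nat) (x : nat -> vec2)
  (Hn : (0 < n)%nat)
  (Hx : forall i, (i < n)%nat -> norm2 (x i) <= 1)
  (Hsep : exists w : vec2, forall i, (i < n)%nat -> 0 < inner w (x i))
  (wstar : vec2) (gamma : R)
  (Hwstar : norm2 wstar = 1)
  (Hmax : forall w : vec2, norm2 w = 1 -> margin n x w <= margin n x wstar)
  (Hgamma : gamma = margin n x wstar)
  (eta : R) (Heta : 0 < eta) :
  (forall t : nat, inner (gd n x eta t) wstar < inner (gd n x eta (S t)) wstar)
  /\
  (eta0 n gamma <= eta ->
     (forall t : nat, (1 <= t)%nat ->
        (* t <= tau, i.e. F(w_s) > 1/(8 eta) for all s < t *)
        (forall s : nat, (s < t)%nat -> / (8 * eta) < F n x (gd n x eta s)) ->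
        gamma * eta / 2 + gamma * (INR t - 1) / 16 <= inner (gd n x eta t) wstar)
     /\
     (forall t : nat, (1 <= t)%nat ->
        8 * lambda_tilde eta gamma <= inner (gd n x eta t) wstar)).
Proof.
  assert (Hgpos : 0 < gamma).
  { destruct (exists_unit_positive_margin n x Hn Hsep) as [u [Hu Hmu]].
    pose proof (Hmax u Hu). lra. }
  assert (Hg1 : gamma <= 1) by (rewrite Hgamma; now apply margin_le_1).
  assert (Hv : forall i, (i < n)%nat -> gamma <= inner (x i) wstar)
    by (intros i Hi; rewrite inner_comm, Hgamma; now apply margin_le_inner).
  split; [intros t; apply (gd_inner_increasing _ _ _ gamma); assumption|].
  intros Heta0.
  assert (Hne : INR n <= eta) by exact (Rle_trans _ _ _ (Rmax_l _ _) Heta0).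
  assert (Hle : 32 / gamma ^ 2 * ln (256 / gamma ^ 2) <= eta)
    by exact (Rle_trans _ _ _ (Rmax_r _ _) Heta0).
  split.
  - intros t Ht Hloss. apply gd_inner_linear_growth; assumption.
  - intros t Ht.
    apply Rle_trans with (gamma * eta / 2); [now apply lambda_tilde_le|].
    apply Rle_trans with (inner (gd n x eta 1) wstar);
      [apply gd_inner_1 | apply (gd_inner_ge_1 _ _ _ gamma)]; assumption.
Qed.
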